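(* Let $T>0$, $B=e_3$ constant, and let $E:[0,T]\times\mathbb{R}^2\to\mathbb{R}^2$ be bounded and Lipschitz. For $\Delta t>0$, $\varepsilon>0$ set $t^n=n\Delta t$, $\lambda=\Delta t/\varepsilon^2$, and given $(x^0,v^0)$ define $(x^n,v^n)$ by $$\varepsilon\frac{x^{n+1}-x^n}{\Delta t}=v^{n+1},\qquad \varepsilon\frac{v^{n+1}-v^n}{\Delta t}=\frac1\varepsilon v^{n+1}\wedge e_3+E(t^n,x^n),$$ and $(y^n)$ by the modified initial datum $y^0=x^0+\varepsilon\big(v^0\wedge e_3+\varepsilon E(t^0,x^0)\big)$ and $\dfrac{y^{n+1}-y^n}{\Delta t}=E(t^n,y^n)\wedge e_3$. Then there exist $C>0$ and $\lambda_0>0$ depending only on $E$ and $T$ such that whenever $0<\Delta t\le1$ and $\lambda\ge\lambda_0$, for all $n\ge1$ with $t^n\le T$, $$\|x^n-y^n\|\le\frac{C\,\Delta t}{\lambda}\Big[1+\Big(\frac1\lambda+\Delta t\Big)\Big\|\frac{v^0}{\varepsilon}-E(t^0,x^0)\wedge e_3\Big\|\Big].$$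
   Context: Vectors of $\mathbb{R}^2$ are identified with vectors $(w_1,w_2,0)$ of $\mathbb{R}^3$, $e_3=(0,0,1)$, and $\wedge$ is the cross product; thus for $w\in\mathbb{R}^2$, $w\wedge e_3=(w_2,-w_1)\in\mathbb{R}^2$. *)

From Stdlib Require Import Reals Lra.
Open Scope R_scope.

Definition vec2 : Type := (R * R)%type.

Definition vadd (a b : vec2) : vec2 := (fst a + fst b, snd a + snd b).
Definition vsub (a b : vec2) : vec2 := (fst a - fst b, snd a - snd b).
Definition vscale (c : R) (a : vec2) : vec2 := (c * fst a, c * snd a).

Definition vnorm (a : vec2) : R := sqrt (fst a ^ 2 + snd a ^ 2).

(* w /\ e3 = (w2, -w1) for w = (w1, w2, 0) *)
Definition wedge_e3 (w : vec2) : vec2 := (snd w, - fst w).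

Definition bounded_field (T : R) (E : R -> vec2 -> vec2) : Prop :=
  exists M : R, forall t x, 0 <= t <= T -> vnorm (E t x) <= M.

Definition lipschitz_field (T : R) (E : R -> vec2 -> vec2) : Prop :=
  exists L : R, forall t s x y, 0 <= t <= T -> 0 <= s <= T ->
    vnorm (vsub (E t x) (E s y)) <= L * (Rabs (t - s) + vnorm (vsub x y)).

From Stdlib Require Import Reals Lra Psatz Lia.
Open Scope R_scope.

(* Write w^n = v^n / eps and J w = w /\ e3.  The velocity step is implicit:
   w^{n+1} - E^n /\ e3 = (I - lambda J)^{-1} (w^n - E^n /\ e3), and since J is a
   rotation by a right angle, (I - lambda J)^{-1} shrinks norms by at least a factor
   lambda.  Hence for lambda >= 2 the scaled velocity stays within
   |w^0 - E^0 /\ e3| / lambda + 2 sup|E| of the drift E /\ e3, and eps^2 |w^n| is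
   of the size claimed.  The guiding centre g^n = x^n + eps v^n /\ e3 satisfies
   g^{n+1} = g^n + dt E(t^n, x^n) /\ e3 exactly, the same scheme as y^n with
   E evaluated at x^n instead of y^n, and g^0 - y^0 = -eps^2 E(0, x^0).  Since
   x^n - g^n = -eps^2 w^n /\ e3, a discrete Gronwall inequality for g^n - y^n
   concludes. *)

Ltac vec2_field :=
  apply injective_projections; unfold vadd, vsub, vscale, wedge_e3; cbn [fst snd]; field; lra.

Lemma vnorm_ge0 (a : vec2) : 0 <= vnorm a.
Proof. apply sqrt_pos. Qed.

Lemma vnorm_scale (c : R) (a : vec2) : vnorm (vscale c a) = Rabs c * vnorm a.
Proof.
  destruct a as [a1 a2]; unfold vnorm, vscale; cbn [fst snd].
  rewrite <- (sqrt_pow2 (Rabs c)) by apply Rabs_pos.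
  rewrite <- sqrt_mult by nra.
  f_equal. rewrite pow2_abs. ring.
Qed.

Lemma vnorm_wedge_e3 (a : vec2) : vnorm (wedge_e3 a) = vnorm a.
Proof. unfold vnorm, wedge_e3; cbn [fst snd]. f_equal; ring. Qed.

Lemma vnorm_resolvent (lam : R) (p : vec2) :
  Rabs lam * vnorm p <= vnorm (vsub p (vscale lam (wedge_e3 p))).
Proof.
  rewrite <- vnorm_scale.
  destruct p as [p1 p2]; unfold vnorm, vsub, vscale, wedge_e3; cbn [fst snd].
  apply sqrt_le_1_alt. nra.
Qed.

Lemma vnorm_add_le (a b : vec2) : vnorm (vadd a b) <= vnorm a + vnorm b.
Proof.
  destruct a as [a1 a2], b as [b1 b2]; unfold vnorm, vadd; cbn [fst snd].
  pose proof (sqrt_cauchy a1 a2 b1 b2) as cauchy; unfold Rsqr in cauchy.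
  assert (Ha := sqrt_sqrt (a1 ^ 2 + a2 ^ 2) ltac:(nra)).
  assert (Hb := sqrt_sqrt (b1 ^ 2 + b2 ^ 2) ltac:(nra)).
  pose proof (sqrt_pos (a1 ^ 2 + a2 ^ 2)). pose proof (sqrt_pos (b1 ^ 2 + b2 ^ 2)).
  replace (a1 * a1 + a2 * a2) with (a1 ^ 2 + a2 ^ 2) in cauchy by ring.
  replace (b1 * b1 + b2 * b2) with (b1 ^ 2 + b2 ^ 2) in cauchy by ring.
  rewrite <- (sqrt_pow2 (sqrt (a1 ^ 2 + a2 ^ 2) + sqrt (b1 ^ 2 + b2 ^ 2))) by lra.
  apply sqrt_le_1_alt. nra.
Qed.

Lemma vnorm_sub_le (a b : vec2) : vnorm (vsub a b) <= vnorm a + vnorm b.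
Proof.
  replace (vsub a b) with (vadd a (vscale (-1) b)) by vec2_field.
  rewrite <- (Rmult_1_l (vnorm b)), <- Rabs_R1, <- Rabs_Ropp, <- vnorm_scale.
  apply vnorm_add_le.
Qed.

Lemma vnorm_sub_triangle (a b c : vec2) :
  vnorm (vsub a c) <= vnorm (vsub a b) + vnorm (vsub b c).
Proof.
  replace (vsub a c) with (vadd (vsub a b) (vsub b c)) by vec2_field.
  apply vnorm_add_le.
Qed.

Lemma vnorm_le_sub_add (a b : vec2) : vnorm a <= vnorm (vsub a b) + vnorm b.
Proof.
  replace a with (vadd (vsub a b) b) at 1 by vec2_field.
  apply vnorm_add_le.
Qed.

Lemma vscale_sub_eq_add (c c' : R) (a b d : vec2) :
  c' * c = 1 -> vscale c (vsub a b) = d -> a = vadd b (vscale c' d).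
Proof.
  intros cc' <-. destruct a as [a1 a2], b as [b1 b2].
  unfold vadd, vsub, vscale; cbn [fst snd]. f_equal.
  - transitivity (b1 + (c' * c) * (a1 - b1)); [rewrite cc' |]; ring.
  - transitivity (b2 + (c' * c) * (a2 - b2)); [rewrite cc' |]; ring.
Qed.

Lemma exp_le_exp (a b : R) : a <= b -> exp a <= exp b.
Proof.
  intros [lt_ab | ->]; [left; now apply exp_increasing | right; reflexivity].
Qed.

Lemma discrete_gronwall (a : nat -> R) (h L c : R) (N : nat) :
  0 <= h -> 0 <= L -> 0 <= c -> 0 <= a 0%nat ->
  (forall k, (k < N)%nat -> a (S k) <= (1 + h * L) * a k + h * c) ->
  a N <= exp (L * (INR N * h)) * (a 0%nat + INR N * h * c).
Proof.
  intros h_ge0 L_ge0 c_ge0 a0_ge0.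
  induction N as [|N IH]; intros step.
  - rewrite Rmult_0_l, Rmult_0_r, exp_0. lra.
  - assert (IH_N := IH (fun k lt_kN => step k (Nat.lt_lt_succ_r _ _ lt_kN))).
    assert (exp_split : exp (L * (INR (S N) * h)) = exp (h * L) * exp (L * (INR N * h))).
    { rewrite <- exp_plus, S_INR. f_equal; ring. }
    assert (Nh_ge0 : 0 <= INR N * h) by (apply Rmult_le_pos; [apply pos_INR | lra]).
    set (X := exp (L * (INR N * h)) * (a 0%nat + INR N * h * c)) in IH_N.
    assert (X_ge0 : 0 <= X) by (apply Rmult_le_pos; [apply Rlt_le, exp_pos | nra]).
    assert ((1 + h * L) * a N <= exp (h * L) * X).
    { apply Rle_trans with ((1 + h * L) * X).
      - apply Rmult_le_compat_l; [nra | exact IH_N].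
      - apply Rmult_le_compat_r; [exact X_ge0 | apply exp_ineq1_le]. }
    assert (h * c <= exp (L * (INR (S N) * h)) * (h * c)).
    { rewrite <- (Rmult_1_l (h * c)) at 1. apply Rmult_le_compat_r; [nra|].
      rewrite <- exp_0. apply exp_le_exp. apply Rmult_le_pos; [lra|].
      apply Rmult_le_pos; [apply pos_INR | lra]. }
    eapply Rle_trans; [apply step; lia|].
    rewrite exp_split in *. rewrite S_INR. unfold X in *. lra.
Qed.

Lemma contraction_bound (a : nat -> R) (lam A c : R) (N : nat) :
  2 <= lam -> 0 <= A -> 0 <= c -> a 0%nat <= A ->
  (forall k, (S k < N)%nat -> lam * a (S k) <= a k + c) ->
  forall k, (k < N)%nat -> a k <= A + c.
Proof.
  intros lam_ge2 A_ge0 c_ge0 a0_le step.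
  induction k as [|k IH]; intros lt_kN; [lra|].
  assert (a k <= A + c) by (apply IH; lia).
  assert (lam * a (S k) <= A + 2 * c) by (specialize (step k lt_kN); lra).
  nra.
Qed.

Definition error_constant (M L T : R) : R :=
  exp (L * T) * ((1 + 2 * L + 3 * L * T) * M + L + L * T) + 3 * M + 1.

Lemma error_constant_gt0 (M L T : R) : 0 <= M -> 0 <= L -> 0 <= T -> 0 < error_constant M L T.
Proof.
  intros M_ge0 L_ge0 T_ge0. unfold error_constant.
  pose proof (exp_pos (L * T)). assert (0 <= L * T) by nra.
  assert (0 <= (1 + 2 * L + 3 * L * T) * M + L + L * T) by nra. nra.
Qed.

Lemma error_constant_dominates (M L T dt lam K0 : R) :
  0 <= M -> 0 <= L -> 0 <= T -> 0 < dt <= 1 -> 0 < lam -> 0 <= K0 ->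
  exp (L * T) * ((1 + 2 * dt * L) * M + dt * L * K0 + T * L * (K0 / lam + 3 * M))
  + (K0 / lam + 3 * M)
  <= error_constant M L T * (1 + (1 / lam + dt) * K0).
Proof.
  intros M_ge0 L_ge0 T_ge0 dt_bounds lam_gt0 K0_ge0. unfold error_constant.
  replace ((1 / lam + dt) * K0) with (K0 / lam + dt * K0) by (field; lra).
  assert (q_ge0 : 0 <= K0 / lam)
    by (apply Rmult_le_pos; [lra | apply Rlt_le, Rinv_0_lt_compat; lra]).
  set (q := K0 / lam) in *. set (K := exp (L * T)).
  set (A := (1 + 2 * L + 3 * L * T) * M + L + L * T).
  assert (K_ge1 : 1 <= K) by (unfold K; pose proof (exp_ineq1_le (L * T)); nra).
  assert (LM_ge0 : 0 <= L * M) by nra.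
  assert (LT_ge0 : 0 <= L * T) by nra.
  assert (LTM_ge0 : 0 <= L * T * M) by nra.
  assert (K * ((1 + 2 * dt * L) * M + 3 * T * L * M) <= K * A).
  { apply Rmult_le_compat_l; [lra|]. unfold A. nra. }
  assert (K * L * (dt * K0) <= (K * A + 3 * M + 1) * (dt * K0)).
  { apply Rmult_le_compat_r; [nra|].
    assert (K * L <= K * A) by (apply Rmult_le_compat_l; unfold A; nra). lra. }
  assert ((K * (T * L) + 1) * q <= (K * A + 3 * M + 1) * q).
  { apply Rmult_le_compat_r; [lra|].
    assert (K * (T * L) <= K * A) by (apply Rmult_le_compat_l; unfold A; nra). lra. }
  lra.
Qed.

Section Scheme.

Variables (E : R -> vec2 -> vec2) (dt eps : R) (x v y : nat -> vec2).
Hypothesis dt_gt0 : 0 < dt.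
Hypothesis eps_gt0 : 0 < eps.
Hypothesis x_step :
  forall n, vscale (eps / dt) (vsub (x (S n)) (x n)) = v (S n).
Hypothesis v_step :
  forall n, vscale (eps / dt) (vsub (v (S n)) (v n)) =
            vadd (vscale (1 / eps) (wedge_e3 (v (S n)))) (E (INR n * dt) (x n)).
Hypothesis y_step :
  forall n, vscale (1 / dt) (vsub (y (S n)) (y n)) = wedge_e3 (E (INR n * dt) (y n)).

Let lam := dt / eps ^ 2.
Let w n := vscale (1 / eps) (v n).
Let Ex n := E (INR n * dt) (x n).
Let Ey n := E (INR n * dt) (y n).
Let centre n := vadd (x n) (vscale eps (wedge_e3 (v n))).

Lemma x_next n : x (S n) = vadd (x n) (vscale (dt / eps) (v (S n))).
Proof. apply (vscale_sub_eq_add (eps / dt) (dt / eps)); [field; lra | apply x_step]. Qed.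

Lemma y_next n : y (S n) = vadd (y n) (vscale dt (wedge_e3 (Ey n))).
Proof. apply (vscale_sub_eq_add (1 / dt) dt); [field; lra | apply y_step]. Qed.

Lemma v_prev n :
  v n = vsub (v (S n)) (vscale (dt / eps) (vadd (vscale (1 / eps) (wedge_e3 (v (S n)))) (Ex n))).
Proof.
  pose proof (vscale_sub_eq_add (eps / dt) (dt / eps) _ _ _ ltac:(field; lra) (v_step n)) as v_next.
  rewrite v_next at 1. unfold Ex. vec2_field.
Qed.

Lemma lam_gt0 : 0 < lam.
Proof. apply Rdiv_lt_0_compat; [lra | apply pow_lt; lra]. Qed.

Lemma w_resolvent_step n :
  vsub (vsub (w (S n)) (wedge_e3 (Ex n)))
       (vscale lam (wedge_e3 (vsub (w (S n)) (wedge_e3 (Ex n))))) =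
  vsub (w n) (wedge_e3 (Ex n)).
Proof. unfold w, lam; rewrite (v_prev n). vec2_field. Qed.

Lemma w_contraction n :
  lam * vnorm (vsub (w (S n)) (wedge_e3 (Ex n))) <= vnorm (vsub (w n) (wedge_e3 (Ex n))).
Proof.
  rewrite <- (w_resolvent_step n), <- (Rabs_pos_eq lam) at 1 by apply Rlt_le, lam_gt0.
  apply vnorm_resolvent.
Qed.

Lemma centre_error_next n :
  vsub (centre (S n)) (y (S n)) =
  vadd (vsub (centre n) (y n)) (vscale dt (wedge_e3 (vsub (Ex n) (Ey n)))).
Proof. unfold centre; rewrite x_next, y_next, (v_prev n). vec2_field. Qed.

Lemma centre_error_init :
  y 0%nat = vadd (x 0%nat) (vscale eps (vadd (wedge_e3 (v 0%nat)) (vscale eps (E 0 (x 0%nat))))) ->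
  vsub (centre 0%nat) (y 0%nat) = vscale (- eps ^ 2) (E 0 (x 0%nat)).
Proof. intros ->. unfold centre. vec2_field. Qed.

Lemma x_sub_y_centre n :
  vsub (x n) (y n) = vsub (vsub (centre n) (y n)) (vscale (eps ^ 2) (wedge_e3 (w n))).
Proof. unfold centre, w. vec2_field. Qed.

Section Estimates.

Variables (T M L : R).
Hypothesis M_ge0 : 0 <= M.
Hypothesis L_ge0 : 0 <= L.
Hypothesis E_bounded : forall t z, 0 <= t <= T -> vnorm (E t z) <= M.
Hypothesis E_lipschitz :
  forall t a b, 0 <= t <= T -> vnorm (vsub (E t a) (E t b)) <= L * vnorm (vsub a b).
Hypothesis lam_ge2 : 2 <= lam.

Let K0 := vnorm (vsub (w 0%nat) (wedge_e3 (E 0 (x 0%nat)))).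

Lemma K0_div_lam_ge0 : 0 <= K0 / lam.
Proof.
  apply Rmult_le_pos; [apply vnorm_ge0 | apply Rlt_le, Rinv_0_lt_compat, lam_gt0].
Qed.

Lemma time_in_range k N : (k <= N)%nat -> INR N * dt <= T -> 0 <= INR k * dt <= T.
Proof.
  intros le_kN le_NT. apply le_INR in le_kN. pose proof (pos_INR k). split; nra.
Qed.

Lemma Ex0 : Ex 0%nat = E 0 (x 0%nat).
Proof. unfold Ex; cbn [INR]. now rewrite Rmult_0_l. Qed.

Lemma Ex_bounded k N : (k <= N)%nat -> INR N * dt <= T -> vnorm (Ex k) <= M.
Proof. intros le_kN le_NT. now apply E_bounded, (time_in_range k N). Qed.

Lemma w_drift_bound N : INR N * dt <= T ->
  forall k, (k < N)%nat -> vnorm (vsub (w (S k)) (wedge_e3 (Ex k))) <= K0 / lam + 2 * M.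
Proof.
  intros le_NT.
  pose proof lam_gt0 as lam_pos.
  apply (contraction_bound (fun k => vnorm (vsub (w (S k)) (wedge_e3 (Ex k)))) lam);
    cbv beta; [lra | apply K0_div_lam_ge0 | lra | |].
  - apply (Rmult_le_reg_l lam); [lra|].
    replace (lam * (K0 / lam)) with K0 by (field; lra).
    pose proof (w_contraction 0%nat) as contraction.
    rewrite Ex0 in contraction |- *. exact contraction.
  - intros k lt_SkN.
    assert (vnorm (vsub (wedge_e3 (Ex k)) (wedge_e3 (Ex (S k)))) <= 2 * M).
    { eapply Rle_trans; [apply vnorm_sub_le|]. rewrite !vnorm_wedge_e3.
      pose proof (Ex_bounded k N ltac:(lia) le_NT).
      pose proof (Ex_bounded (S k) N ltac:(lia) le_NT). lra. }
    pose proof (w_contraction (S k)).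
    pose proof (vnorm_sub_triangle (w (S k)) (wedge_e3 (Ex k)) (wedge_e3 (Ex (S k)))).
    lra.
Qed.

Lemma w_bound N : INR N * dt <= T ->
  forall k, (k < N)%nat -> vnorm (w (S k)) <= K0 / lam + 3 * M.
Proof.
  intros le_NT k lt_kN.
  pose proof (vnorm_le_sub_add (w (S k)) (wedge_e3 (Ex k))) as split_w.
  rewrite vnorm_wedge_e3 in split_w.
  pose proof (w_drift_bound N le_NT k lt_kN).
  pose proof (Ex_bounded k N ltac:(lia) le_NT). lra.
Qed.

Lemma w0_bound : 0 <= T -> vnorm (w 0%nat) <= K0 + M.
Proof.
  intros T_ge0.
  pose proof (vnorm_le_sub_add (w 0%nat) (wedge_e3 (E 0 (x 0%nat)))) as split_w.
  rewrite vnorm_wedge_e3 in split_w.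
  assert (vnorm (E 0 (x 0%nat)) <= M) by (apply E_bounded; lra).
  unfold K0. lra.
Qed.

Lemma centre_error_step k : 0 <= INR k * dt <= T ->
  vnorm (vsub (centre (S k)) (y (S k))) <=
  (1 + dt * L) * vnorm (vsub (centre k) (y k)) + dt * (L * eps ^ 2 * vnorm (w k)).
Proof.
  intros time_k.
  rewrite centre_error_next.
  eapply Rle_trans; [apply vnorm_add_le|].
  rewrite vnorm_scale, vnorm_wedge_e3, Rabs_pos_eq by lra.
  assert (vnorm (vsub (x k) (y k)) <= vnorm (vsub (centre k) (y k)) + eps ^ 2 * vnorm (w k)).
  { rewrite x_sub_y_centre. eapply Rle_trans; [apply vnorm_sub_le|].
    rewrite vnorm_scale, vnorm_wedge_e3, Rabs_pos_eq by (apply pow_le; lra). lra. }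
  assert (vnorm (vsub (Ex k) (Ey k)) <= L * vnorm (vsub (x k) (y k)))
    by now apply E_lipschitz.
  assert (dt * vnorm (vsub (Ex k) (Ey k)) <=
          dt * (L * (vnorm (vsub (centre k) (y k)) + eps ^ 2 * vnorm (w k)))).
  { apply Rmult_le_compat_l; [lra|]. eapply Rle_trans; [eassumption|].
    now apply Rmult_le_compat_l. }
  lra.
Qed.

Hypothesis y_init :
  y 0%nat = vadd (x 0%nat) (vscale eps (vadd (wedge_e3 (v 0%nat)) (vscale eps (E 0 (x 0%nat))))).

Lemma centre_error_first : 0 <= T ->
  vnorm (vsub (centre 1%nat) (y 1%nat)) <= eps ^ 2 * ((1 + 2 * dt * L) * M + dt * L * K0).
Proof.
  intros T_ge0.
  assert (eps2_pos : 0 < eps ^ 2) by (apply pow_lt; lra).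
  eapply Rle_trans; [apply centre_error_step; cbn [INR]; lra|].
  rewrite (centre_error_init y_init), vnorm_scale, Rabs_Ropp, Rabs_pos_eq by lra.
  assert (vnorm (E 0 (x 0%nat)) <= M) by (apply E_bounded; lra).
  pose proof (w0_bound T_ge0).
  assert ((1 + dt * L) * (eps ^ 2 * vnorm (E 0 (x 0%nat))) <= (1 + dt * L) * (eps ^ 2 * M)).
  { apply Rmult_le_compat_l; [nra|]. now apply Rmult_le_compat_l; [lra|]. }
  assert (dt * (L * eps ^ 2 * vnorm (w 0%nat)) <= dt * (L * eps ^ 2 * (K0 + M))).
  { apply Rmult_le_compat_l; [lra|]. apply Rmult_le_compat_l; [nra | assumption]. }
  lra.
Qed.

Lemma x_sub_y_bound n : (1 <= n)%nat -> INR n * dt <= T ->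
  vnorm (vsub (x n) (y n)) <=
  eps ^ 2 * (exp (L * T) * ((1 + 2 * dt * L) * M + dt * L * K0 + T * L * (K0 / lam + 3 * M))
             + (K0 / lam + 3 * M)).
Proof.
  destruct n as [|m]; [lia|]. intros _ le_nT.
  assert (eps2_pos : 0 < eps ^ 2) by (apply pow_lt; lra).
  assert (m_le : 0 <= INR m * dt <= T).
  { apply (time_in_range m (S m)); [lia | exact le_nT]. }
  assert (w_sup_ge0 : 0 <= K0 / lam + 3 * M) by (pose proof K0_div_lam_ge0; lra).
  set (w_sup := K0 / lam + 3 * M) in *.
  assert (c_ge0 : 0 <= L * eps ^ 2 * w_sup) by (apply Rmult_le_pos; [apply Rmult_le_pos |]; lra).
  set (b k := vnorm (vsub (centre (S k)) (y (S k)))).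
  assert (b0_ge0 : 0 <= b 0%nat) by apply vnorm_ge0.
  assert (gronwall :
    b m <= exp (L * (INR m * dt)) * (b 0%nat + INR m * dt * (L * eps ^ 2 * w_sup))).
  { apply discrete_gronwall; [lra | lra | lra | lra |].
    intros k lt_km. unfold b.
    eapply Rle_trans; [apply centre_error_step, (time_in_range (S k) (S m)); [lia | exact le_nT]|].
    apply Rplus_le_compat_l, Rmult_le_compat_l; [lra|].
    apply Rmult_le_compat_l; [nra|]. apply (w_bound (S m)); [exact le_nT | lia]. }
  assert (b 0%nat <= eps ^ 2 * ((1 + 2 * dt * L) * M + dt * L * K0))
    by (apply centre_error_first; lra).
  assert (exp (L * (INR m * dt)) <= exp (L * T)) by (apply exp_le_exp; nra).
  assert (b m <= exp (L * T) *
                 (eps ^ 2 * ((1 + 2 * dt * L) * M + dt * L * K0) + T * (L * eps ^ 2 * w_sup))).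
  { eapply Rle_trans; [exact gronwall|].
    apply Rmult_le_compat; [apply Rlt_le, exp_pos | | lra |].
    - apply Rplus_le_le_0_compat; [lra|]. apply Rmult_le_pos; [lra | exact c_ge0].
    - apply Rplus_le_compat; [assumption|]. apply Rmult_le_compat_r; lra. }
  assert (vnorm (vsub (x (S m)) (y (S m))) <= b m + eps ^ 2 * w_sup).
  { rewrite x_sub_y_centre. eapply Rle_trans; [apply vnorm_sub_le|].
    rewrite vnorm_scale, vnorm_wedge_e3, Rabs_pos_eq by lra.
    apply Rplus_le_compat_l, Rmult_le_compat_l; [lra|]. apply (w_bound (S m)); [exact le_nT | lia]. }
  lra.
Qed.

Hypothesis dt_le1 : dt <= 1.

Lemma scheme_error_estimate n : (1 <= n)%nat -> INR n * dt <= T ->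
  vnorm (vsub (x n) (y n)) <= error_constant M L T * dt / lam * (1 + (1 / lam + dt) * K0).
Proof.
  intros le_1n le_nT.
  assert (T_ge0 : 0 <= T) by (pose proof (time_in_range n n (le_n n) le_nT); lra).
  replace (error_constant M L T * dt / lam) with (eps ^ 2 * error_constant M L T)
    by (unfold lam; field; lra).
  eapply Rle_trans; [now apply x_sub_y_bound|].
  rewrite (Rmult_assoc (eps ^ 2)). apply Rmult_le_compat_l; [apply pow_le; lra|].
  apply error_constant_dominates; [lra .. | apply vnorm_ge0].
Qed.

End Estimates.

End Scheme.

Lemma bounded_field_nonneg (T : R) (E : R -> vec2 -> vec2) : 0 <= T -> bounded_field T E ->
  exists M, 0 <= M /\ forall t z, 0 <= t <= T -> vnorm (E t z) <= M.
Proof.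
  intros T_ge0 [M E_bounded]. exists M. split; [|exact E_bounded].
  eapply Rle_trans; [apply vnorm_ge0 | apply (E_bounded 0 (0, 0)); lra].
Qed.

Lemma lipschitz_field_space (T : R) (E : R -> vec2 -> vec2) : lipschitz_field T E ->
  exists L, 0 <= L /\
    forall t a b, 0 <= t <= T -> vnorm (vsub (E t a) (E t b)) <= L * vnorm (vsub a b).
Proof.
  intros [L E_lipschitz]. exists (Rabs L). split; [apply Rabs_pos|].
  intros t a b time_t.
  eapply Rle_trans; [now apply E_lipschitz|].
  rewrite Rminus_diag, Rabs_R0, Rplus_0_l.
  apply Rmult_le_compat_r; [apply vnorm_ge0 | apply RRle_abs].
Qed.

Theorem mainTheorem6 (T : R) (E : R -> vec2 -> vec2) :
  0 < T -> bounded_field T E -> lipschitz_field T E ->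
  exists C lambda0 : R, 0 < C /\ 0 < lambda0 /\
    forall (dt eps : R) (x v y : nat -> vec2),
      0 < dt <= 1 -> 0 < eps ->
      lambda0 <= dt / eps ^ 2 ->
      (forall n, vscale (eps / dt) (vsub (x (S n)) (x n)) = v (S n)) ->
      (forall n, vscale (eps / dt) (vsub (v (S n)) (v n)) =
                 vadd (vscale (1 / eps) (wedge_e3 (v (S n)))) (E (INR n * dt) (x n))) ->
      y 0%nat = vadd (x 0%nat)
                  (vscale eps (vadd (wedge_e3 (v 0%nat)) (vscale eps (E 0 (x 0%nat))))) ->
      (forall n, vscale (1 / dt) (vsub (y (S n)) (y n)) = wedge_e3 (E (INR n * dt) (y n))) ->
      forall n : nat, (1 <= n)%nat -> INR n * dt <= T ->
        vnorm (vsub (x n) (y n)) <=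
          C * dt / (dt / eps ^ 2) *
          (1 + (1 / (dt / eps ^ 2) + dt) *
               vnorm (vsub (vscale (1 / eps) (v 0%nat)) (wedge_e3 (E 0 (x 0%nat))))).
Proof.
  intros T_gt0 E_bounded E_lipschitz.
  destruct (bounded_field_nonneg T E) as (M & M_ge0 & bound); [lra | exact E_bounded |].
  destruct (lipschitz_field_space T E E_lipschitz) as (L & L_ge0 & lipschitz).
  exists (error_constant M L T), 2.
  split; [apply error_constant_gt0; lra|]. split; [lra|].
  intros dt eps x v y [dt_gt0 dt_le1] eps_gt0 lam_ge2 x_step v_step y_init y_step.
  exact (scheme_error_estimate E dt eps x v y dt_gt0 eps_gt0 x_step v_step y_step T M L
           M_ge0 L_ge0 bound lipschitz lam_ge2 y_init dt_le1).
Qed.
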